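(* Let $L$ be an atomic orthomodular lattice and let $V\in\mathcal{B}(L)$ be a $2$-dimensional BSA with $\mathcal{F}_V=\{P,P^{\perp}\}$ which is not spiked and such that each of $P$ and $P^{\perp}$ is the join of three or more pairwise orthogonal atoms of $L$. Let $A,B\in\mathcal{M}_V$. Then $A$ and $B$ have the same leading element if and only if there exist a $2$-dimensional, non-spiked $W\in\mathcal{B}(L)$ with $W\neq V$ and $C,D\in\mathcal{M}_W$ such that $A\subseteq C$ and $B\subseteq D$.
   Context: $L$ is an orthomodular lattice with $0$, $1$ and orthocomplementation $P\mapsto P^{\perp}$, which is atomic (every nonzero element lies above an atom, i.e. a minimal nonzero element). Elements $P,Q$ are orthogonal if $P\le Q^{\perp}$. A Boolean subalgebra (BSA) $V$ of $L$ is generated by a family $\mathcal{F}$ of nonzero pairwise orthogonal elements of $L$ with join $1$ if the elements of $\mathcal{F}$ are the atoms of $V$ and every element of $V$ is a join of elements of $\mathcal{F}$; this family is denoted $\mathcal{F}_V$. $\mathcal{B}(L)$ is the set of BSAs of $L$ generated by some such family, ordered by inclusion; the dimension of $V$ is the cardinality of $\mathcal{F}_V$. An mBSA is an element of $\mathcal{B}(L)$ generated by a family of pairwise orthogonal atoms of $L$ with join $1$. $V\in\mathcal{B}(L)$ is spiked if it is an mBSA or its generating family contains precisely one element that is not an atom of $L$ (all others being atoms); in the latter case this unique non-atom is called the leading element of $V$. For a $2$-dimensional non-spiked $V\in\mathcal{B}(L)$, $\mathcal{S}_V$ denotes the set of spiked elements of $\mathcal{B}(L)$ containing $V$, and $\mathcal{M}_V$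 the set of minimal elements of $\mathcal{S}_V$ with respect to inclusion. *)

From HB Require Import structures.
From mathcomp Require Import all_boot all_order.
Set Implicit Arguments. Unset Strict Implicit. Unset Printing Implicit Defensive.
Import Order.Theory.
Local Open Scope order_scope.

Section OML.
Context {d : Order.disp_t} {L : tbLatticeType d} (oc : L -> L).

Record is_OML : Prop := {
  oc_invol : forall x, oc (oc x) = x;
  oc_anti : forall x y, x <= y -> oc y <= oc x;
  oc_meet : forall x, x `&` oc x = \bot;
  oc_join : forall x, x `|` oc x = \top;
  oml_law : forall x y, x <= y -> y = x `|` (y `&` oc x)
}.

Definition atomL (a : L) : Prop :=
  a <> \bot /\ forall y, y <= a -> y = \bot \/ y = a.

Definition atomic : Prop :=
  forall x : L, x <> \bot -> exists a, atomL a /\ a <= x.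

Definition orth (x y : L) : Prop := x <= oc y.

Definition is_sup (S : L -> Prop) (x : L) : Prop :=
  (forall y, S y -> y <= x) /\ (forall z, (forall y, S y -> y <= z) -> x <= z).

Definition pairwise_orth (S : L -> Prop) : Prop :=
  forall x y, S x -> S y -> x <> y -> orth x y.

Definition BSA (V : L -> Prop) : Prop :=
  V \bot /\ V \top /\
  (forall x y, V x -> V y -> V (x `&` y)) /\
  (forall x y, V x -> V y -> V (x `|` y)) /\
  (forall x, V x -> V (oc x)) /\
  (forall x y z, V x -> V y -> V z -> x `&` (y `|` z) = (x `&` y) `|` (x `&` z)).

Definition Vatom (V : L -> Prop) (x : L) : Prop :=
  V x /\ x <> \bot /\ forall y, V y -> y <= x -> y = \bot \/ y = x.

Definition generated_by (V F : L -> Prop) : Prop :=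
  (forall x, F x -> x <> \bot) /\ pairwise_orth F /\ is_sup F \top /\
  (forall x, F x <-> Vatom V x) /\
  (forall v, V v -> exists S : L -> Prop, (forall y, S y -> F y) /\ is_sup S v).

Definition inB (V : L -> Prop) : Prop :=
  BSA V /\ exists F, generated_by V F.

Definition FV (V : L -> Prop) : L -> Prop := Vatom V.

Definition mBSA (V : L -> Prop) : Prop :=
  inB V /\ forall x, FV V x -> atomL x.

Definition leading_element (V : L -> Prop) (x : L) : Prop :=
  FV V x /\ ~ atomL x /\ forall y, FV V y -> y <> x -> atomL y.

Definition spiked (V : L -> Prop) : Prop :=
  inB V /\ (mBSA V \/ exists x, leading_element V x).

Definition two_dim (V : L -> Prop) : Prop :=
  exists Q R, Q <> R /\ forall x, FV V x <-> x = Q \/ x = R.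

Definition subsetL (A B : L -> Prop) : Prop := forall x, A x -> B x.

Definition S_ (V : L -> Prop) (A : L -> Prop) : Prop :=
  spiked A /\ subsetL V A.

Definition M_ (V : L -> Prop) (A : L -> Prop) : Prop :=
  S_ V A /\ forall A', S_ V A' -> subsetL A' A -> subsetL A A'.

Definition join_of_three_or_more_atoms (x : L) : Prop :=
  exists S : L -> Prop,
    (forall a, S a -> atomL a) /\ pairwise_orth S /\ is_sup S x /\
    exists a b c, S a /\ S b /\ S c /\ a <> b /\ a <> c /\ b <> c.
End OML.

From mathcomp Require Import all_boot all_order.
From Stdlib Require Import Classical.
Set Implicit Arguments. Unset Strict Implicit. Unset Printing Implicit Defensive.
Import Order.Theory.
Local Open Scope order_scope.

(* A minimal spiked extension A of V = {0, P, oc P, 1} has leading element P or oc P: cutting A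
   down to the elements disjoint from or above its leading candidate yields a spiked extension
   of V inside A, which by minimality is A itself.
   If A and B both have leading element P, choose an atom a below P and put Q := P `&` oc a.
   Splitting P into a and Q turns A and B into minimal spiked extensions of the frame
   W = {0, Q, oc Q, 1}, which differs from V and is not spiked because the other two atoms
   below P lie below Q and oc P lies below oc Q.
   Conversely, if C contains A, then the leading element of C lies below that of A: the
   complement of the latter is a join of atoms of L, all of them atoms of C.  So if A and B
   had complementary leading elements P and oc P, the leading elements of C and D (which are
   Q or oc Q) would be P and oc P, forcing W = V. *)

Section Orthomodular.
Context {d : Order.disp_t} {L : tbLatticeType d} (oc : L -> L) (H : is_OML oc).

Lemma ocK x : oc (oc x) = x. Proof. exact: oc_invol H x. Qed.
Lemma meetxoc x : x `&` oc x = \bot. Proof. exact: oc_meet H x. Qed.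
Lemma joinxoc x : x `|` oc x = \top. Proof. exact: oc_join H x. Qed.
Lemma omlE x y : x <= y -> y = x `|` (y `&` oc x). Proof. exact: (oml_law H). Qed.

Lemma le_oc2 x y : (oc x <= oc y) = (y <= x).
Proof.
by apply/idP/idP => [/(oc_anti H)|/(oc_anti H)//]; rewrite !ocK.
Qed.

Lemma leoc_sym x y : (x <= oc y) = (y <= oc x).
Proof. by rewrite -le_oc2 ocK. Qed.

Lemma le_oc_eq0 x p : x <= p -> x <= oc p -> x = \bot.
Proof. by move=> h1 h2; apply/eqP; rewrite -lex0 -(meetxoc p) lexI h1 h2. Qed.

Lemma oc1 : oc \top = \bot. Proof. by rewrite -(meetxoc \top) meet1x. Qed.
Lemma oc0 : oc \bot = \top. Proof. by rewrite -oc1 ocK. Qed.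

Lemma ocU x y : oc (x `|` y) = oc x `&` oc y.
Proof.
apply: le_anti; rewrite lexI !le_oc2 leUl leUr /=.
by rewrite leoc_sym leUx -!(leoc_sym (_ `&` _)) leIl leIr.
Qed.

Lemma ocI x y : x `&` y = oc (oc x `|` oc y).
Proof. by rewrite ocU !ocK. Qed.

(* Fails in general ortholattices: this is where the orthomodular law enters. *)
Lemma orth_joinIl x z p : x <= p -> z <= oc p -> (x `|` z) `&` p = x.
Proof.
move=> hx hz; have hle : x <= (x `|` z) `&` p by rewrite lexI leUl hx.
rewrite {1}(omlE hle); suff -> : (x `|` z) `&` p `&` oc x = \bot by rewrite joinx0.
apply: (@le_oc_eq0 _ (x `|` z)); first by rewrite -meetA leIl.
rewrite ocU lexI leIr /= -meetA; by apply/leIxr/leIxl; rewrite leoc_sym.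
Qed.

Lemma orth_joinIr x z p : x <= p -> z <= oc p -> (x `|` z) `&` oc p = z.
Proof. by move=> hx hz; rewrite joinC orth_joinIl ?ocK. Qed.

Lemma oc_orth_join y z p : y <= p -> z <= oc p ->
  oc (y `|` z) = (p `&` oc y) `|` (oc p `&` oc z).
Proof.
move=> hy hz; set m := (p `&` oc y) `|` (oc p `&` oc z).
have hm : m <= oc (y `|` z).
  rewrite ocU leUx !lexI !leIr /= !andbT.
  by apply/andP; split; apply: leIxl; [rewrite leoc_sym | rewrite le_oc2].
rewrite {1}(omlE hm) -ocU; suff -> : y `|` z `|` m = \top by rewrite oc1 joinx0.
by rewrite /m joinACA -!omlE ?joinxoc.
Qed.

Lemma BSA_orth (X : L -> Prop) x y : BSA oc X -> X x -> X y -> x `&` y = \bot -> x <= oc y.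
Proof.
move=> [_ [_ [_ [_ [hC hD]]]]] Xx Xy xy0.
have := hD x y (oc y) Xx Xy (hC _ Xy).
by rewrite joinxoc meetx1 xy0 join0x => ->; apply: leIr.
Qed.

End Orthomodular.

Section Sups.
Context {d : Order.disp_t} {L : tbLatticeType d}.

Lemma is_sup_ext (S S' : L -> Prop) x : (forall y, S y <-> S' y) -> is_sup S x -> is_sup S' x.
Proof.
move=> e [h1 h2]; split; first by move=> y /e /h1.
by move=> z hz; apply: h2 => y /e /hz.
Qed.

Lemma is_sup0 : is_sup (fun _ => False) (\bot : L).
Proof. by split => // z _; rewrite le0x. Qed.

Lemma is_sup1 (x : L) : is_sup (fun y => y = x) x.
Proof. by split => [y ->|z h]; rewrite ?lexx // h. Qed.

Lemma is_supU (S1 S2 : L -> Prop) x1 x2 : is_sup S1 x1 -> is_sup S2 x2 ->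
  is_sup (fun y => S1 y \/ S2 y) (x1 `|` x2).
Proof.
move=> [a1 b1] [a2 b2]; split.
  by move=> y [/a1|/a2] h; [exact: le_trans h (leUl _ _) | exact: le_trans h (leUr _ _)].
by move=> z hz; rewrite leUx b1 ?b2 // => y hy; apply: hz; tauto.
Qed.

End Sups.

Section BSAAtoms.
Context {d : Order.disp_t} {L : tbLatticeType d} (oc : L -> L) (H : is_OML oc).

Lemma Vatom_ext (X Y : L -> Prop) t : (forall x, X x <-> Y x) -> Vatom X t -> Vatom Y t.
Proof. by move=> e [/e Yt [t0 ht]]; split=> //; split=> // y /e; apply: ht. Qed.

Lemma Vatom_neq0 (X : L -> Prop) t : Vatom X t -> t <> \bot.
Proof. by case=> _ []. Qed.

Lemma atomL_Vatom (X : L -> Prop) t : X t -> atomL t -> Vatom X t.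
Proof. by move=> Xt [t0 ht]; split=> //; split=> // y _; apply: ht. Qed.

Lemma Vatom_split (X : L -> Prop) p s : BSA oc X -> X p -> Vatom X s -> s <= p \/ s <= oc p.
Proof.
move=> hX Xp [Xs [_ hs]]; have [_ [_ [hI _]]] := hX.
case: (hs (s `&` p) (hI _ _ Xs Xp) (leIl _ _)) => e.
  by right; apply: BSA_orth hX Xs Xp e.
by left; rewrite -e leIr.
Qed.

Lemma Vatom_orth (X : L -> Prop) s t : BSA oc X -> Vatom X s -> Vatom X t -> s <> t -> s <= oc t.
Proof.
move=> hX vs [Xt [t0 ht]] st; case: (Vatom_split hX Xt vs) => // hst.
by case: (ht s (proj1 vs) hst) => // s0; case: (Vatom_neq0 vs).
Qed.

Lemma generated_by_Vatom (X : L -> Prop) : inB oc X -> generated_by oc X (Vatom X).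
Proof.
move=> [_ [F [F0 [Fo [Fs [FE Fv]]]]]].
split; first by move=> x /Vatom_neq0.
split; first by move=> x y /FE Fx /FE Fy; apply: Fo.
split; first exact: is_sup_ext FE Fs.
split=> // v /Fv [S [SF Sv]]; exists S; split=> // y /SF /FE //.
Qed.

Lemma leading_element_ext (X Y : L -> Prop) p :
  (forall x, X x <-> Y x) -> leading_element X p -> leading_element Y p.
Proof.
move=> e [Xp [nap ha]]; split; first exact: Vatom_ext Xp.
split=> // y Yy; apply: ha; apply: Vatom_ext Yy => x; exact: iff_sym (e x).
Qed.

Lemma leading_element_unique (X : L -> Prop) x y :
  leading_element X x -> leading_element X y -> x = y.
Proof. by move=> [Xx [nax _]] [Xy [_ hy]]; apply: NNPP => /(hy _ Xx). Qed.

Lemma Vatom_meet_le (A : L -> Prop) p t :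
  Vatom (fun z => A z /\ z <= p) t <-> Vatom A t /\ t <= p.
Proof.
split=> [[[At tp] [t0 ht]] | [[At [t0 ht]] tp]]; do 2!split=> //.
  by split=> // w Aw wt; apply: ht => //; split=> //; apply: le_trans wt tp.
by move=> w [Aw _]; apply: ht.
Qed.

Lemma inB_atomistic (X : L -> Prop) : BSA oc X ->
  (forall v, X v -> exists S : L -> Prop, (forall y, S y -> Vatom X y) /\ is_sup S v) ->
  inB oc X.
Proof.
move=> hX hv; split=> //; exists (Vatom X).
split; first by move=> x /Vatom_neq0.
split; first by move=> x y Vx Vy xy; exact: (Vatom_orth hX Vx Vy xy).
split; last by split.
have [S [SV [_ Sl]]] := hv _ (proj1 (proj2 hX)).
by split=> [y _|z hz]; [rewrite lex1 | apply: Sl => y /SV /hz].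
Qed.

End BSAAtoms.

Section Span2.
Context {d : Order.disp_t} {L : tbLatticeType d} (oc : L -> L) (H : is_OML oc).

Definition span2 (e f y : L) : Prop := y = \bot \/ y = e \/ y = f \/ y = e `|` f.

Lemma Vatom_span2 (e f : L) : e <> \bot -> f <> \bot -> e <= oc f ->
  forall t, Vatom (span2 e f) t <-> t = e \/ t = f.
Proof.
move=> e0 f0 ef t; have fe : f <= oc e by rewrite (leoc_sym H).
have nfe : ~ f <= e by move=> fe'; exact: f0 (le_oc_eq0 H (lexx f) (le_trans fe' ef)).
have nef : ~ e <= f by move=> ef'; exact: e0 (le_oc_eq0 H (lexx e) (le_trans ef' fe)).
split.
  move=> [[->|[->|[->|->]]] [t0 ht]] //; [by left | by right |].
  by case: (ht e (or_intror (or_introl erefl)) (leUl _ _)) => // /esym ->; left.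
case=> ->; split; rewrite /span2; try tauto; split=> // w [->|[->|[->|->]]] //; try tauto.
- by rewrite leUx => /andP [_ /nfe].
- by rewrite leUx => /andP [/nef].
Qed.

Variables e f : L.
Hypothesis ef : e <= oc f.

Let ef0 : e `&` f = \bot. Proof. by apply: (le_oc_eq0 H (leIr _ _)); apply: leIxl. Qed.
Let fe0 : f `&` e = \bot. Proof. by rewrite meetC ef0. Qed.
Let m1 : e `&` (e `|` f) = e. Proof. exact: joinKI. Qed.
Let m2 : f `&` (e `|` f) = f. Proof. by rewrite joinC joinKI. Qed.
Let m3 : (e `|` f) `&` e = e. Proof. by rewrite meetC joinKI. Qed.
Let m4 : (e `|` f) `&` f = f. Proof. by rewrite meetC joinC joinKI. Qed.
Let j1 : e `|` (e `|` f) = e `|` f. Proof. by rewrite joinA joinxx. Qed.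
Let j2 : f `|` (e `|` f) = e `|` f. Proof. by rewrite joinCA joinxx. Qed.
Let j3 : (e `|` f) `|` e = e `|` f. Proof. by rewrite joinAC joinxx. Qed.
Let j4 : (e `|` f) `|` f = e `|` f. Proof. by rewrite -joinA joinxx. Qed.
Let j5 : f `|` e = e `|` f. Proof. by rewrite joinC. Qed.

Ltac span2_simpl := repeat progress rewrite ?meet0x ?meetx0 ?join0x ?joinx0
  ?meetxx ?joinxx ?ef0 ?fe0 ?m1 ?m2 ?m3 ?m4 ?j1 ?j2 ?j3 ?j4 ?j5.
Ltac span2_close := rewrite /span2; span2_simpl;
  first [ by left | by right; left | by right; right; left | by right; right; right ].

Lemma span2_join y y' : span2 e f y -> span2 e f y' -> span2 e f (y `|` y').
Proof. by case=> [->|[->|[->|->]]]; case=> [->|[->|[->|->]]]; span2_close. Qed.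

Lemma span2_meet y y' : span2 e f y -> span2 e f y' -> span2 e f (y `&` y').
Proof. by case=> [->|[->|[->|->]]]; case=> [->|[->|[->|->]]]; span2_close. Qed.

Lemma span2_distr y y1 y2 : span2 e f y -> span2 e f y1 -> span2 e f y2 ->
  y `&` (y1 `|` y2) = (y `&` y1) `|` (y `&` y2).
Proof.
by case=> [->|[->|[->|->]]]; case=> [->|[->|[->|->]]]; case=> [->|[->|[->|->]]];
  span2_simpl.
Qed.

Lemma span2_le y : span2 e f y -> y <= e `|` f.
Proof. by case=> [->|[->|[->|->]]]; rewrite ?le0x ?leUl ?leUr ?lexx. Qed.

Lemma span2_compl y : span2 e f y -> span2 e f ((e `|` f) `&` oc y).
Proof.
have fe : f <= oc e by rewrite (leoc_sym H).
case=> [->|[->|[->|->]]].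
- by rewrite (oc0 H) meetx1; span2_close.
- by rewrite joinC (orth_joinIl H fe) ?(ocK H) //; span2_close.
- by rewrite (orth_joinIl H ef) ?(ocK H) //; span2_close.
- by rewrite (meetxoc H); span2_close.
Qed.

End Span2.

Section Span2oc.
Context {d : Order.disp_t} {L : tbLatticeType d} (oc : L -> L) (H : is_OML oc).

Lemma le_ocK (q : L) : q <= oc (oc q). Proof. by rewrite (ocK H). Qed.

Lemma BSA_span2oc (q : L) : BSA oc (span2 q (oc q)).
Proof.
have hq := le_ocK q.
split; first by left.
split; first by right; right; right; rewrite (joinxoc H).
split; first by move=> x y; apply: (span2_meet H hq).
split; first by move=> x y; apply: span2_join.
split; last by move=> x y z; apply: (span2_distr H hq).
by move=> x hx; rewrite -[oc x]meet1x -(joinxoc H q); apply: (span2_compl H hq).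
Qed.

Lemma span2oc_of_Vatoms (X : L -> Prop) p : BSA oc X -> Vatom X p -> Vatom X (oc p) ->
  forall x, X x <-> span2 p (oc p) x.
Proof.
move=> hX [Xp [_ hp]] [Xq [_ hq]] x; have [X0 [X1 [hI [hU [_ hD]]]]] := hX.
split; last by case=> [->|[->|[->|->]]]; rewrite ?(joinxoc H) //; apply: hU.
move=> Xx; have := hD x p (oc p) Xx Xp Xq; rewrite (joinxoc H) meetx1 => ->.
case: (hp _ (hI _ _ Xx Xp) (leIr _ _)) => ->;
  case: (hq _ (hI _ _ Xx Xq) (leIr _ _)) => ->; rewrite ?joinx0 ?join0x.
- by left.
- by right; right; left.
- by right; left.
- by right; right; right.
Qed.

Lemma span2oc_oc (p x : L) : span2 (oc p) (oc (oc p)) x <-> span2 p (oc p) x.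
Proof. by rewrite /span2 (ocK H) joinC; tauto. Qed.

Lemma span2oc_sub (X : L -> Prop) p : BSA oc X -> X p -> subsetL (span2 p (oc p)) X.
Proof.
move=> [X0 [X1 [_ [XU [XC _]]]]] Xp x [->|[->|[->|->]]] //.
  exact: XC.
exact: XU (XC _ Xp).
Qed.

Variable q : L.
Hypotheses (q0 : q <> \bot) (q1 : q <> \top).

Lemma oc_neq0 : oc q <> \bot.
Proof. by move=> e; apply: q1; rewrite -(ocK H q) e (oc0 H). Qed.

Lemma neq_oc : q <> oc q.
Proof. by move=> e; apply: q0; apply: (le_oc_eq0 H (lexx q)); rewrite -e. Qed.

Lemma Vatom_span2oc x : Vatom (span2 q (oc q)) x <-> x = q \/ x = oc q.
Proof. exact: (Vatom_span2 H q0 oc_neq0 (le_ocK q) x). Qed.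

Lemma inB_span2oc : inB oc (span2 q (oc q)).
Proof.
apply: (inB_atomistic H (BSA_span2oc q)) => v [->|[->|[->|->]]].
- by exists (fun _ => False); split=> //; exact: is_sup0.
- by exists (fun y => y = q); split; [move=> y ->; apply/Vatom_span2oc; left | exact: is_sup1].
- by exists (fun y => y = oc q); split; [move=> y ->; apply/Vatom_span2oc; right | exact: is_sup1].
- exists (fun y => y = q \/ y = oc q); split; first by move=> y /Vatom_span2oc.
  by apply: is_supU; apply: is_sup1.
Qed.

Lemma two_dim_span2oc : two_dim (span2 q (oc q)).
Proof. by exists q, (oc q); split; [exact: neq_oc | exact: Vatom_span2oc]. Qed.

Lemma span2oc_not_spiked : ~ atomL q -> ~ atomL (oc q) -> ~ spiked oc (span2 q (oc q)).
Proof.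
move=> naq naqc [_ [[_ am]|[u [/Vatom_span2oc hu [nau au]]]]].
  by apply: naq; apply: am; apply/Vatom_span2oc; left.
case: hu => eu; rewrite eu in au.
  by apply: naqc; apply: au; [apply/Vatom_span2oc; right | exact/nesym/neq_oc].
by apply: naq; apply: au; [apply/Vatom_span2oc; left | exact: neq_oc].
Qed.

End Span2oc.

Section Restriction.
Context {d : Order.disp_t} {L : tbLatticeType d} (oc : L -> L) (H : is_OML oc).

(* The coarsening of [X] in which [p] becomes an atom. *)
Definition restr (X : L -> Prop) (p x : L) : Prop := X x /\ (x `&` p = \bot \/ p <= x).

Variables (X : L -> Prop) (p : L).
Hypotheses (hX : BSA oc X) (Xp : X p) (p0 : p <> \bot).

Lemma BSA_restr : BSA oc (restr X p).
Proof.
have [X0 [X1 [hI [hU [hC hD]]]]] := hX.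
split; first by split=> //; left; rewrite meet0x.
split; first by split=> //; right; rewrite lex1.
have meet0_le x y : y <= x -> x `&` p = \bot -> y `&` p = \bot.
  by move=> yx xp; apply/eqP; rewrite -lex0 -xp leI2.
split.
  move=> x y [Xx ex] [Xy ey]; split; first exact: hI.
  case: ex => [ex|px]; first by left; apply: meet0_le ex; apply: leIl.
  case: ey => [ey|py]; first by left; apply: meet0_le ey; apply: leIr.
  by right; rewrite lexI px py.
split.
  move=> x y [Xx ex] [Xy ey]; split; first exact: hU.
  case: ex => [ex|px]; last by right; apply: lexUl.
  case: ey => [ey|py]; last by right; apply: lexUr.
  by left; rewrite meetC hD // (meetC p x) (meetC p y) ex ey joinxx.
split; last by move=> x y z [+ _] [+ _] [+ _]; apply: hD.
move=> x [Xx [ex|ex]]; split; auto.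
  by right; rewrite (leoc_sym H); apply: BSA_orth hX Xx Xp ex.
by left; apply: (le_oc_eq0 H (leIr _ _)); apply: leIxl; rewrite (le_oc2 H).
Qed.

Lemma Vatom_restr t : Vatom (restr X p) t <-> t = p \/ (Vatom X t /\ t <= oc p).
Proof.
split.
  move=> [[Xt [et|et]] [t0 ht]].
    have tp : t <= oc p by apply: BSA_orth hX Xt Xp et.
    right; split=> //; split=> //; split=> // y Xy yt; apply: ht => //; split=> //.
    by left; apply: (le_oc_eq0 H (leIr _ _)); apply: leIxl; apply: le_trans yt tp.
  by left; case: (ht p) => //; split=> //; right.
case=> [->|[[Xt [t0 ht]] tp]].
  split; first by split=> //; right.
  split=> // y [Xy [ey|ey]] yp; last by right; apply: le_anti; rewrite ey yp.
  by left; rewrite -ey; apply/esym/meet_l.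
split.
  split=> //; left; apply: (le_oc_eq0 H (leIr _ _)); exact: leIxl tp.
by split=> // y [Xy _]; apply: ht.
Qed.

Lemma inB_restr : inB oc X -> inB oc (restr X p).
Proof.
move=> hXB; apply: (inB_atomistic H BSA_restr) => v [Xv ev].
have [_ [_ [_ [_ Xatoms]]]] := generated_by_Vatom hXB.
have [S [SV Ssup]] := Xatoms v Xv; have [Sup Sl] := (Ssup).
have Ratom s : S s -> s <= oc p -> Vatom (restr X p) s.
  by move=> Ss sp; apply/Vatom_restr; right; split=> //; apply: SV.
case: ev => [ev|pv].
  have vp : v <= oc p by apply: BSA_orth hX Xv Xp ev.
  by exists S; split=> // s Ss; apply: (Ratom s Ss); apply: le_trans (Sup _ Ss) vp.
exists (fun s => s = p \/ (S s /\ s <= oc p)); split.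
  by move=> s [->|[Ss sp]]; [apply/Vatom_restr; left | apply: Ratom].
split; first by move=> s [->|[/Sup]].
move=> z hz; apply: Sl => s Ss; case: (Vatom_split H hX Xp (SV _ Ss)) => h.
  by apply: le_trans h _; apply: hz; left.
by apply: hz; right.
Qed.

Lemma leading_element_restr : ~ atomL p ->
  (forall t, Vatom X t -> t <= oc p -> atomL t) -> leading_element (restr X p) p.
Proof.
move=> nap hat; split; first by apply/Vatom_restr; left.
by split=> // y /Vatom_restr [->//|[Vy yp]] _; apply: hat.
Qed.

End Restriction.

Section TwoDimensional.
Context {d : Order.disp_t} {L : tbLatticeType d} (oc : L -> L) (H : is_OML oc).

Lemma two_dim_FV (W : L -> Prop) : inB oc W -> two_dim W ->
  exists Q, forall x, FV W x <-> x = Q \/ x = oc Q.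
Proof.
move=> hW [Q [R [QR hQR]]]; have [_ [Wo [[_ Ws] _]]] := generated_by_Vatom hW.
have [[WQ _] [WR _]] : Vatom W Q /\ Vatom W R by split; apply/hQR; [left | right].
have QRT : Q `|` R = \top.
  by apply/le_anti; rewrite lex1; apply: Ws => y /hQR [->|->]; rewrite ?leUl ?leUr.
have [_ [_ [_ [_ [hC hD]]]]] := proj1 hW.
suff ocQ : oc Q = R by exists Q => x; rewrite ocQ.
have RQ : R <= oc Q by apply: Wo; [apply/hQR; right | apply/hQR; left | move=> e; apply: QR].
apply/le_anti; rewrite RQ andbT.
have := hD (oc Q) Q R (hC _ WQ) WQ WR.
by rewrite QRT meetx1 meetC (meetxoc H) join0x => ->; apply: leIr.
Qed.

Variables (V : L -> Prop) (P : L).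
Hypotheses (hV : inB oc V) (hFV : forall x, FV V x <-> x = P \/ x = oc P).

Lemma span2oc_of_FV x : V x <-> span2 P (oc P) x.
Proof. by apply: (span2oc_of_Vatoms H (proj1 hV)); apply/hFV; [left | right]. Qed.

Lemma FV_neq0 : P <> \bot /\ oc P <> \bot.
Proof. by split; apply: (@Vatom_neq0 _ _ V); apply/hFV; [left | right]. Qed.

Lemma not_spiked_nonatoms : ~ spiked oc V -> ~ atomL P /\ ~ atomL (oc P).
Proof.
have [VP VPc] : FV V P /\ FV V (oc P) by split; apply/hFV; [left | right].
move=> nsp; suff nmix : ~ (atomL P /\ atomL (oc P)).
  split=> [aP|aPc]; apply: nsp; split=> //; right.
  - exists (oc P); split=> //; split=> [aPc|y /hFV [->//|->//]]; exact: nmix.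
  - exists P; split=> //; split=> [aP|y /hFV [->//|->//]]; exact: nmix.
by move=> [aP aPc]; apply: nsp; split=> //; left; split=> // x /hFV [->|->].
Qed.

Lemma M_leading_element_of (A : L -> Prop) p : M_ oc V A -> (p = P \/ p = oc P) ->
  ~ atomL p -> (forall t, Vatom A t -> t <= oc p -> atomL t) -> leading_element A p.
Proof.
move=> [[[hA _] VA] Amin] hp nap hat.
have Ap : A p.
  by apply: VA; apply/span2oc_of_FV; case: hp => ->; [right; left | right; right; left].
have p0 : p <> \bot by have [P0 Pc0] := FV_neq0; case: hp => ->.
have hR := BSA_restr H (proj1 hA) Ap.
have Rp : restr A p p by split=> //; right.
have lR := leading_element_restr H (proj1 hA) Ap p0 nap hat.
have SR : S_ oc V (restr A p).
  split; first by split; [exact: (inB_restr H (proj1 hA) Ap p0 hA) | right; exists p].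
  move=> x /span2oc_of_FV Vx; apply: (span2oc_sub hR Rp).
  by case: hp => ep; rewrite ep ?(span2oc_oc H).
have RA : subsetL (restr A p) A by move=> x [].
by apply: leading_element_ext lR => x; split; [apply: RA | apply: Amin].
Qed.

Lemma M_leading_element (A : L -> Prop) : ~ spiked oc V -> M_ oc V A ->
  leading_element A P \/ leading_element A (oc P).
Proof.
move=> nsp MA; have [naP naPc] := not_spiked_nonatoms nsp.
case: (classic (exists t, Vatom A t /\ t <= oc P /\ ~ atomL t)) => [[t [At [tP nat]]]|].
  right; apply: M_leading_element_of => //; first by right.
  move=> s As; rewrite (ocK H) => sP.
  case: MA => [[[_ [[_ am]|[u [Au [nau hu]]]]] _] _]; first exact: am.
  have tu : t = u by apply: NNPP => tu; apply: nat; apply: hu.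
  apply: hu => // su; apply: (Vatom_neq0 As).
  by apply: (le_oc_eq0 H sP); rewrite su -tu.
move=> nex; left; apply: M_leading_element_of => //; first by left.
by move=> t At tP; apply: NNPP => nat; apply: nex; exists t.
Qed.

End TwoDimensional.

Section LeadingBounds.
Context {d : Order.disp_t} {L : tbLatticeType d} (oc : L -> L) (H : is_OML oc).

(* [oc p] is the join of atoms of [A] below it; these are atoms of [L], hence atoms of [C]
   other than the non-atom [u], hence orthogonal to [u]. *)
Lemma leading_element_le (A C : L -> Prop) p u : inB oc A -> leading_element A p ->
  inB oc C -> subsetL A C -> leading_element C u -> u <= p.
Proof.
move=> hA [Ap [nap hat]] hC AC [Cu [nau _]].
have Apc : A (oc p) by have [_ [_ [_ [_ [hAC _]]]]] := proj1 hA; apply: hAC; case: Ap.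
have [_ [_ [_ [_ Av]]]] := generated_by_Vatom hA.
have [S [SA [Sup Sl]]] := Av _ Apc.
rewrite -(le_oc2 H); apply: Sl => s Ss; have As := SA _ Ss.
have sp : s <> p.
  by move=> e; apply: (Vatom_neq0 As); apply: (le_oc_eq0 H (lexx s)); rewrite {2}e Sup.
have [Cs _] := As; have as_ := hat _ As sp.
apply: (Vatom_orth H (proj1 hC) (atomL_Vatom (AC _ Cs) as_) Cu) => su.
by apply: nau; rewrite -su.
Qed.

Lemma leading_element_complementary (A B C D : L -> Prop) p u v :
  inB oc A -> inB oc B -> leading_element A p -> leading_element B (oc p) ->
  inB oc C -> inB oc D -> subsetL A C -> subsetL B D ->
  leading_element C u -> leading_element D v -> (v = u \/ v = oc u) -> u = p.
Proof.
move=> hA hB lA lB hC hD AC BD lC lD huv.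
have up : u <= p := leading_element_le hA lA hC AC lC.
have vp : v <= oc p := leading_element_le hB lB hD BD lD.
case: huv => ev; rewrite ev in vp.
  by case: lC => [[_ [u0 _]] _]; case: u0; apply: (le_oc_eq0 H up vp).
by apply/le_anti; rewrite up -(le_oc2 H).
Qed.

End LeadingBounds.

Section OrthogonalSum.
Context {d : Order.disp_t} {L : tbLatticeType d} (oc : L -> L) (H : is_OML oc).

(* A Boolean subalgebra of the interval [[\bot, p]], with relative complement [p `&` oc y]. *)
Record BSA_below (Y : L -> Prop) (p : L) : Prop := {
  below0 : Y \bot;
  belowT : Y p;
  below_le : forall y, Y y -> y <= p;
  belowU : forall y y', Y y -> Y y' -> Y (y `|` y');
  belowC : forall y, Y y -> Y (p `&` oc y);
  belowD : forall y y1 y2, Y y -> Y y1 -> Y y2 -> y `&` (y1 `|` y2) = (y `&` y1) `|` (y `&` y2)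
}.

Lemma BSA_below_span2 e f : e <= oc f -> BSA_below (span2 e f) (e `|` f).
Proof.
move=> ef; split; [by left | by right; right; right | exact: span2_le | exact: span2_join | |].
- exact: (span2_compl H ef).
- exact: (span2_distr H ef).
Qed.

Lemma BSA_below_le (A : L -> Prop) p : BSA oc A -> A p -> BSA_below (fun z => A z /\ z <= p) p.
Proof.
move=> [A0 [A1 [hI [hU [hC hD]]]]] Ap.
split=> [|||y y' [Ay yp] [Ay' y'p]|y [Ay _]|y y1 y2 [Ay _] [Ay1 _] [Ay2 _]].
- by rewrite le0x.
- by [].
- by move=> y [].
- by split; [apply: hU | rewrite leUx yp].
- by split; [apply: hI => //; apply: hC | apply: leIl].
- exact: hD.
Qed.

Definition orth_sum (Y Z : L -> Prop) (x : L) : Prop := exists y z, Y y /\ Z z /\ x = y `|` z.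

Variables (Y Z : L -> Prop) (p : L).
Hypotheses (hY : BSA_below Y p) (hZ : BSA_below Z (oc p)).

Lemma orth_sum_split x : orth_sum Y Z x ->
  Y (x `&` p) /\ Z (x `&` oc p) /\ x = (x `&` p) `|` (x `&` oc p).
Proof.
move=> [y [z [Yy [Zz ->]]]]; have [yp zp] := (below_le hY Yy, below_le hZ Zz).
by rewrite (orth_joinIl H yp zp) (orth_joinIr H yp zp).
Qed.

Lemma orth_sum_eq u u' : orth_sum Y Z u -> orth_sum Y Z u' ->
  u `&` p = u' `&` p -> u `&` oc p = u' `&` oc p -> u = u'.
Proof.
move=> /orth_sum_split [_ [_ e]] /orth_sum_split [_ [_ e']] hp hpc.
by rewrite e e' hp hpc.
Qed.

Lemma orth_sumU x x' : orth_sum Y Z x -> orth_sum Y Z x' -> orth_sum Y Z (x `|` x').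
Proof.
move=> [y [z [Yy [Zz ->]]]] [y' [z' [Yy' [Zz' ->]]]].
exists (y `|` y'), (z `|` z'); rewrite joinACA.
by split; [exact: (belowU hY Yy Yy') | split; [exact: (belowU hZ Zz Zz') |]].
Qed.

Lemma orth_sum_oc x : orth_sum Y Z x -> orth_sum Y Z (oc x).
Proof.
move=> [y [z [Yy [Zz ->]]]]; exists (p `&` oc y), (oc p `&` oc z).
split; [exact: (belowC hY Yy) | split; [exact: (belowC hZ Zz) |]].
exact: (oc_orth_join H (below_le hY Yy) (below_le hZ Zz)).
Qed.

Lemma orth_sumI x x' : orth_sum Y Z x -> orth_sum Y Z x' -> orth_sum Y Z (x `&` x').
Proof.
by move=> hx hx'; rewrite (ocI H); apply/orth_sum_oc/orth_sumU; apply: orth_sum_oc.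
Qed.

Lemma orth_sumUI x x' q : (q = p \/ q = oc p) -> orth_sum Y Z x -> orth_sum Y Z x' ->
  (x `|` x') `&` q = (x `&` q) `|` (x' `&` q).
Proof.
move=> hq [y [z [Yy [Zz ->]]]] [y' [z' [Yy' [Zz' ->]]]].
have yp : y `|` y' <= p by rewrite leUx !(below_le hY).
have zp : z `|` z' <= oc p by rewrite leUx !(below_le hZ).
have [y1 y2] := (below_le hY Yy, below_le hY Yy').
have [z1 z2] := (below_le hZ Zz, below_le hZ Zz').
rewrite joinACA.
case: hq => ->.
  by rewrite (orth_joinIl H yp zp) (orth_joinIl H y1 z1) (orth_joinIl H y2 z2).
by rewrite (orth_joinIr H yp zp) (orth_joinIr H y1 z1) (orth_joinIr H y2 z2).
Qed.

Lemma BSA_orth_sum : BSA oc (orth_sum Y Z).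
Proof.
split.
  exists \bot, \bot; rewrite joinxx.
  by split; [exact: (below0 hY) | split; [exact: (below0 hZ) |]].
split.
  exists p, (oc p); rewrite (joinxoc H).
  by split; [exact: (belowT hY) | split; [exact: (belowT hZ) |]].
split; first exact: orth_sumI.
split; first exact: orth_sumU.
split; first exact: orth_sum_oc.
move=> x x1 x2 hx hx1 hx2.
have meetIr (u v w : L) : (u `&` v) `&` w = (u `&` w) `&` (v `&` w) by rewrite meetACA meetxx.
have splitD q : q = p \/ q = oc p ->
    (x `&` (x1 `|` x2)) `&` q = (x `&` q) `&` ((x1 `&` q) `|` (x2 `&` q)) /\
    ((x `&` x1) `|` (x `&` x2)) `&` q = ((x `&` q) `&` (x1 `&` q)) `|` ((x `&` q) `&` (x2 `&` q)).
  move=> hq; rewrite meetIr (orth_sumUI hq hx1 hx2).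
  rewrite (orth_sumUI hq (orth_sumI hx hx1) (orth_sumI hx hx2)).
  by rewrite [(x `&` x1) `&` q]meetIr [(x `&` x2) `&` q]meetIr.
have [[Yx [Zx _]] [[Yx1 [Zx1 _]] [Yx2 [Zx2 _]]]] :=
  (orth_sum_split hx, (orth_sum_split hx1, orth_sum_split hx2)).
apply: orth_sum_eq.
- by apply: orth_sumI => //; apply: orth_sumU.
- by apply: orth_sumU; apply: orth_sumI.
- have [-> ->] := splitD p (or_introl erefl); exact: (belowD hY).
- have [-> ->] := splitD (oc p) (or_intror erefl); exact: (belowD hZ).
Qed.

Lemma Vatom_orth_sum t : Vatom (orth_sum Y Z) t <-> Vatom Y t \/ Vatom Z t.
Proof.
have Y_sum y : Y y -> orth_sum Y Z y.
  by exists y, \bot; rewrite joinx0; do !split=> //; exact: (below0 hZ).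
have Z_sum z : Z z -> orth_sum Y Z z.
  by exists \bot, z; rewrite join0x; do !split=> //; exact: (below0 hY).
split.
  move=> [[y [z [Yy [Zz et]]]] [t0 ht]].
  case: (ht y (Y_sum _ Yy)); [by rewrite et leUl | move=> y0 | move=> yt].
    have tz : t = z by rewrite et y0 join0x.
    by right; rewrite tz in t0 ht *; split=> //; split=> // w /Z_sum; apply: ht.
  by left; rewrite -yt in t0 ht *; split=> //; split=> // w /Y_sum; apply: ht.
have sum_le_p w : orth_sum Y Z w -> w <= p -> Y w.
  by move=> /orth_sum_split [Yw _] wp; rewrite (meet_l wp) in Yw.
have sum_le_pc w : orth_sum Y Z w -> w <= oc p -> Z w.
  by move=> /orth_sum_split [_ [Zw _]] wp; rewrite (meet_l wp) in Zw.
case=> [[Yt [t0 ht]]|[Zt [t0 ht]]]; (split; [by [apply: Y_sum | apply: Z_sum] |]); split=> //.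
  move=> w hw wt; apply: ht (wt); apply: sum_le_p hw _.
  exact: le_trans wt (below_le hY Yt).
move=> w hw wt; apply: ht (wt); apply: sum_le_pc hw _.
exact: le_trans wt (below_le hZ Zt).
Qed.

End OrthogonalSum.

(* [A] with its leading element [P] split into the atom [a] and [P `&` oc a]. *)
Definition split_leading {d : Order.disp_t} {L : tbLatticeType d} (oc : L -> L)
    (A : L -> Prop) (P a : L) : L -> Prop :=
  orth_sum (span2 a (P `&` oc a)) (fun z => A z /\ z <= oc P).

Section SplitLeading.
Context {d : Order.disp_t} {L : tbLatticeType d} (oc : L -> L) (H : is_OML oc).
Variables (A : L -> Prop) (P a : L).
Hypotheses (hA : inB oc A) (lA : leading_element A P).
Hypotheses (a_atom : atomL a) (aP : a <= P).
Hypotheses (Q0 : P `&` oc a <> \bot) (naQ : ~ atomL (P `&` oc a)).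

Local Notation Q := (P `&` oc a).
Local Notation C := (split_leading oc A P a).

Let AP : A P. Proof. by case: lA => [[]]. Qed.
Let APc : A (oc P). Proof. by have [_ [_ [_ [_ [hC _]]]]] := proj1 hA; apply: hC. Qed.
Let a0 : a <> \bot. Proof. by case: a_atom. Qed.
Let aQ : a <= oc Q. Proof. by rewrite (leoc_sym H) leIr. Qed.
Let aUQ : a `|` Q = P. Proof. by rewrite -(omlE H aP). Qed.

Let hY : BSA_below oc (span2 a Q) P.
Proof. by rewrite -{2}aUQ; apply: BSA_below_span2. Qed.
Let hZ : BSA_below oc (fun z => A z /\ z <= oc P) (oc P).
Proof. exact: (BSA_below_le (proj1 hA) APc). Qed.

Lemma A_atom_below t : Vatom A t -> t <= oc P -> atomL t.
Proof.
move=> At tP; case: lA => [[_ [P0 _]] [_ hat]]; apply: hat => // tP'.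
by apply: P0; apply: (le_oc_eq0 H (lexx P)); rewrite -{1}tP'.
Qed.

Lemma Vatom_split_leading t : Vatom C t <-> t = a \/ t = Q \/ (Vatom A t /\ t <= oc P).
Proof.
rewrite (Vatom_orth_sum H hY hZ) (Vatom_span2 H a0 Q0 aQ) Vatom_meet_le.
by split=> [[[->|->]|]|[->|[->|]]]; tauto.
Qed.

Lemma inB_split_leading : inB oc C.
Proof.
apply: (inB_atomistic H (BSA_orth_sum H hY hZ)) => v [y [z [Yy [[Az zP] ->]]]].
have [_ [_ [_ [_ Av]]]] := generated_by_Vatom hA.
have [S [SA Sz]] := Av _ Az.
have SC s : S s -> Vatom C s.
  move=> Ss; apply/Vatom_split_leading; right; right; split; first exact: SA.
  by apply: le_trans zP; case: Sz => + _; apply.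
have pick (x : L) : x = a \/ x = Q -> Vatom C x by move=> hx; apply/Vatom_split_leading; tauto.
case: Yy => [->|[->|[->|->]]].
- exists (fun s => False \/ S s); split; first by move=> s [|/SC].
  exact: (is_supU is_sup0 Sz).
- exists (fun s => s = a \/ S s); split; first by move=> s [->|/SC]; [apply: pick; left|].
  exact: (is_supU (is_sup1 a) Sz).
- exists (fun s => s = Q \/ S s); split; first by move=> s [->|/SC]; [apply: pick; right|].
  exact: (is_supU (is_sup1 Q) Sz).
- exists (fun s => (s = a \/ s = Q) \/ S s); split; first by move=> s [/pick|/SC].
  by apply: is_supU Sz; apply: is_supU; apply: is_sup1.
Qed.

Lemma leading_element_split_leading : leading_element C Q.
Proof.
split; first by apply/Vatom_split_leading; right; left.
split=> // y /Vatom_split_leading [->|[->//|[At tP]]] _; [exact: a_atom | exact: A_atom_below].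
Qed.

Lemma span2oc_sub_split_leading : subsetL (span2 Q (oc Q)) C.
Proof.
apply: (span2oc_sub (BSA_orth_sum H hY hZ)).
by case: leading_element_split_leading => [[]].
Qed.

Lemma sub_split_leading : subsetL A C.
Proof.
have [_ [_ [hI [_ [_ hD]]]]] := proj1 hA.
move=> x Ax; exists (x `&` P), (x `&` oc P).
have [[_ [_ hP]] _] := lA.
split; first by case: (hP _ (hI _ _ Ax AP) (leIr _ _)) => ->; [left | right; right; right].
split; first by split; [exact: hI | exact: leIr].
by have := hD x P (oc P) Ax AP APc; rewrite (joinxoc H) meetx1.
Qed.

Section Minimality.
Variables (V : L -> Prop) (A' : L -> Prop).
Hypotheses (hV : inB oc V) (hFV : forall x, FV V x <-> x = P \/ x = oc P) (MA : M_ oc V A).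
Hypotheses (SA' : S_ oc (span2 Q (oc Q)) A') (A'C : subsetL A' C).

Let hA' : inB oc A'. Proof. by case: SA' => [[]]. Qed.
Let A'Q : A' Q. Proof. by case: SA' => _; apply; right; left. Qed.
Let Vatom_CQ : Vatom C Q. Proof. by apply/Vatom_split_leading; right; left. Qed.

Let Vatom_A'Q : Vatom A' Q.
Proof. by have [_ [_ hQ]] := Vatom_CQ; split; [exact: A'Q | split=> // y /A'C; apply: hQ]. Qed.

Let atoms_off_Q s : Vatom A' s -> s <> Q -> atomL s.
Proof.
case: SA' => [[_ [[_ am]|[u [Au [nau hu]]]]] _]; first by move=> /am.
have uQ : u = Q by apply: NNPP => uQ; apply: naQ; apply: (hu _ Vatom_A'Q) => Qu; apply: uQ.
by rewrite uQ in hu; apply: hu.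
Qed.

(* Otherwise every atom of [A'] would lie below [oc a], and so would their join [\top]. *)
Let A'a : A' a.
Proof.
apply: NNPP => na; apply: a0; apply: (le_oc_eq0 H (lexx a)); apply: le_trans (lex1 a) _.
have [_ [_ [[_ Asup] _]]] := generated_by_Vatom hA'; apply: Asup => s As.
have [-> | sQ] := classic (s = Q); first by rewrite leIr.
have [A's _] := As; have sC := A'C A's.
case/Vatom_split_leading: (atomL_Vatom sC (atoms_off_Q As sQ)) => [sa|[//|[_ sP]]].
  by case: na; rewrite -sa.
by apply: le_trans sP _; rewrite (le_oc2 H).
Qed.

Let A'P : A' P.
Proof. by rewrite -aUQ; have [_ [_ [_ [hU _]]]] := proj1 hA'; apply: hU A'a A'Q. Qed.

(* By minimality of [A], the spiked algebra [restr A' P] between [V] and [A] equals [A]. *)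
Let sub_A : subsetL A A'.
Proof.
have P0 : P <> \bot by case: lA => [[_ []]].
have hat t : Vatom A' t -> t <= oc P -> atomL t.
  move=> At tP; apply: atoms_off_Q => // tQ; apply: Q0; rewrite -tQ in tP *.
  by apply: (le_oc_eq0 H _ tP); rewrite tQ leIl.
have hR := BSA_restr H (proj1 hA') A'P.
have SR : S_ oc V (restr A' P).
  split.
    split; first exact: (inB_restr H (proj1 hA') A'P P0 hA').
    have nP : ~ atomL P by case: lA => _ [].
    by right; exists P; exact: (leading_element_restr H (proj1 hA') A'P P0 nP hat).
  move=> x /(span2oc_of_FV H hV hFV); apply: (span2oc_sub hR).
  by split=> //; right.
have RA : subsetL (restr A' P) A.
  have [_ [_ [_ [AU _]]]] := proj1 hA.
  move=> x [A'x ex]; have [y [z [Yy [[Az zP] ex']]]] := A'C A'x.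
  have xP : x `&` P = y by rewrite ex' (orth_joinIl H (below_le hY Yy) zP).
  rewrite ex'; case: ex => [x0 | Px]; first by rewrite -xP x0 join0x.
  by rewrite -xP (meet_idPr Px); apply: AU.
by move=> x /(proj2 MA _ SR RA) [].
Qed.

Lemma split_leading_sub : subsetL C A'.
Proof.
have [A'0 [_ [_ [A'U _]]]] := proj1 hA'.
move=> v [y [z [Yy [[Az _] ->]]]]; apply: (A'U); last exact: sub_A.
by case: Yy => [->|[->|[->|->]]]; [exact: A'0 | exact: A'a | exact: A'Q | rewrite aUQ; exact: A'P].
Qed.

End Minimality.

Lemma M_split_leading (V : L -> Prop) : inB oc V -> (forall x, FV V x <-> x = P \/ x = oc P) ->
  M_ oc V A -> M_ oc (span2 Q (oc Q)) C.
Proof.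
move=> hV hFV MA; split; last by move=> A' SA' A'C; exact: (split_leading_sub hV hFV MA SA' A'C).
split; last exact: span2oc_sub_split_leading.
by split; [exact: inB_split_leading | right; exists Q; exact: leading_element_split_leading].
Qed.

End SplitLeading.

Section NewFrame.
Context {d : Order.disp_t} {L : tbLatticeType d} (oc : L -> L) (H : is_OML oc).
Variables (P a b c : L).
Hypotheses (a_atom : atomL a) (b_atom : atomL b) (c_atom : atomL c).
Hypotheses (aP : a <= P) (bP : b <= P) (cP : c <= P).
Hypotheses (ba : b <= oc a) (ca : c <= oc a) (bc : b <> c).

Local Notation Q := (P `&` oc a).

Let bQ : b <= Q. Proof. by rewrite lexI bP ba. Qed.
Let cQ : c <= Q. Proof. by rewrite lexI cP ca. Qed.
Let a_not_below_Q : ~ a <= Q.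
Proof.
by move=> aQ; case: a_atom => a0 _; apply: a0 (le_oc_eq0 H (lexx a) (le_trans aQ (leIr _ _))).
Qed.

Lemma frame_neq0 : Q <> \bot.
Proof. by move=> Q0; case: b_atom => b0 _; apply/b0/eqP; rewrite -lex0 -Q0. Qed.

Lemma frame_neqT : Q <> \top.
Proof. by move=> QT; apply: a_not_below_Q; rewrite QT lex1. Qed.

Lemma frame_not_atom : ~ atomL Q.
Proof.
move=> [_ hQ]; case: (hQ b bQ) => [b0|eb]; first by case: b_atom.
case: (hQ c cQ) => [c0|ec]; first by case: c_atom.
by apply: bc; rewrite eb ec.
Qed.

Lemma frame_oc_not_atom : oc P <> \bot -> ~ atomL (oc Q).
Proof.
move=> Pc0 [_ hQ]; have PQ : oc P <= oc Q by rewrite (le_oc2 H) leIl.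
case: (hQ _ PQ) => // ePQ; apply: a_not_below_Q.
by rewrite -(ocK H Q) -ePQ (ocK H).
Qed.

Lemma frame_neq (V : L -> Prop) : (forall x, V x <-> span2 P (oc P) x) ->
  ~ (forall x, span2 Q (oc Q) x <-> V x).
Proof.
move=> hV eW; have : V Q by apply/eW; right; left.
case/hV => [Q0|[QP|[QPc|QT]]].
- exact: frame_neq0 Q0.
- by apply: a_not_below_Q; rewrite QP.
- by case: b_atom => b0 _; apply: b0 (le_oc_eq0 H bP _); rewrite -QPc bQ.
- by apply: frame_neqT; rewrite QT (joinxoc H).
Qed.

End NewFrame.

Definition extendable_in_other_frame {d : Order.disp_t} {L : tbLatticeType d} (oc : L -> L)
    (V A B : L -> Prop) : Prop :=
  exists W : L -> Prop, inB oc W /\ two_dim W /\ ~ spiked oc W /\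
    ~ (forall x, W x <-> V x) /\
    exists C D : L -> Prop, M_ oc W C /\ M_ oc W D /\ subsetL A C /\ subsetL B D.

Section Extensions.
Context {d : Order.disp_t} {L : tbLatticeType d} (oc : L -> L) (H : is_OML oc).
Variables (V A B : L -> Prop) (P : L).
Hypotheses (hV : inB oc V) (hFV : forall x, FV V x <-> x = P \/ x = oc P).
Hypotheses (MA : M_ oc V A) (MB : M_ oc V B).

Let inB_M (W X : L -> Prop) : M_ oc W X -> inB oc X. Proof. by case=> [[[]]]. Qed.

Lemma extendable_of_same_leading : leading_element A P -> leading_element B P ->
  join_of_three_or_more_atoms oc P -> extendable_in_other_frame oc V A B.
Proof.
move=> lA lB [S [Sat [So [[Sup _] [a [b [c [Sa [Sb [Sc [ab [ac bc]]]]]]]]]]]].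
have [ba ca] : b <= oc a /\ c <= oc a by split; apply: So => // e; [apply: ab | apply: ac].
have [Q0 QT] := (frame_neq0 (Sat b Sb) (Sup b Sb) ba, frame_neqT H (P := P) (Sat a Sa)).
have naQ := frame_not_atom (Sat b Sb) (Sat c Sc) (Sup b Sb) (Sup c Sc) ba ca bc.
have naQc := frame_oc_not_atom H (Sat a Sa) (Sup a Sa) (proj2 (FV_neq0 hFV)).
exists (span2 (P `&` oc a) (oc (P `&` oc a))).
split; first exact: (inB_span2oc H Q0 QT).
split; first exact: (two_dim_span2oc H Q0 QT).
split; first exact: (span2oc_not_spiked H Q0 QT naQ naQc).
split; first exact: (frame_neq H (Sat a Sa) (Sat b Sb) (Sup a Sa) (Sup b Sb) ba
  (span2oc_of_FV H hV hFV)).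
exists (split_leading oc A P a), (split_leading oc B P a).
have [at_a aP] := (Sat a Sa, Sup a Sa).
split; first exact: (M_split_leading H (inB_M MA) lA at_a aP Q0 naQ hV hFV MA).
split; first exact: (M_split_leading H (inB_M MB) lB at_a aP Q0 naQ hV hFV MB).
by split; [exact: (sub_split_leading H (inB_M MA) lA aP) |
  exact: (sub_split_leading H (inB_M MB) lB aP)].
Qed.

Lemma not_extendable_of_distinct_leading : leading_element A P -> leading_element B (oc P) ->
  ~ extendable_in_other_frame oc V A B.
Proof.
move=> lA lB [W [hW [W2 [Wns [WV [C [D [MC [MD [AC BD]]]]]]]]]].
have [Q hFW] := two_dim_FV H hW W2.
have [u [lC hu]] : exists u, leading_element C u /\ (u = Q \/ u = oc Q).
  by case: (M_leading_element H hW hFW Wns MC) => lC; [exists Q | exists (oc Q)]; auto.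
have [v [lD hv]] : exists v, leading_element D v /\ (v = Q \/ v = oc Q).
  by case: (M_leading_element H hW hFW Wns MD) => lD; [exists Q | exists (oc Q)]; auto.
have uv : v = u \/ v = oc u by case: hu => ->; case: hv => ->; rewrite ?(ocK H); tauto.
have uP := leading_element_complementary H (inB_M MA) (inB_M MB) lA lB (inB_M MC) (inB_M MD)
  AC BD lC lD uv.
apply: WV => x; rewrite (span2oc_of_FV H hW hFW) (span2oc_of_FV H hV hFV) -uP.
by case: hu => ->; last rewrite (span2oc_oc H).
Qed.

Lemma extendable_iff_same_leading : ~ spiked oc V -> join_of_three_or_more_atoms oc P ->
  leading_element A P ->
  (exists x, leading_element A x /\ leading_element B x) <-> extendable_in_other_frame oc V A B.
Proof.
move=> nsp h3 lA; have [lB|lB] := M_leading_element H hV hFV nsp MB.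
  by split=> _; [exact: extendable_of_same_leading | exists P].
split=> [[x [lAx lBx]]|hW]; last by case: (not_extendable_of_distinct_leading lA lB hW).
have [P0 _] := FV_neq0 hFV; case: (neq_oc H P0).
exact: etrans (leading_element_unique lA lAx) (esym (leading_element_unique lB lBx)).
Qed.

End Extensions.

Theorem lemma5p1 (d : Order.disp_t) (L : tbLatticeType d) (oc : L -> L)
  (hOML : is_OML oc) (hatomic : atomic (L := L))
  (V : L -> Prop) (P : L) (hV : inB oc V)
  (hFV : forall x, FV V x <-> x = P \/ x = oc P)
  (hVns : ~ spiked oc V)
  (hP : join_of_three_or_more_atoms oc P)
  (hPc : join_of_three_or_more_atoms oc (oc P))
  (A B : L -> Prop) (hA : M_ oc V A) (hB : M_ oc V B) :
  (exists x, leading_element A x /\ leading_element B x) <->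
  (exists W : L -> Prop, inB oc W /\ two_dim W /\ ~ spiked oc W /\
     ~ (forall x, W x <-> V x) /\
     exists C D : L -> Prop, M_ oc W C /\ M_ oc W D /\
       subsetL A C /\ subsetL B D).
Proof.
have hFVc x : FV V x <-> x = oc P \/ x = oc (oc P) by rewrite (ocK hOML) hFV; tauto.
case: (M_leading_element hOML hV hFV hVns hA) => lA.
  exact: (extendable_iff_same_leading hOML hV hFV hA hB hVns hP lA).
exact: (extendable_iff_same_leading hOML hV hFVc hA hB hVns hPc lA).
Qed.
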